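(* Let $\mathcal A$ be a unital $C^*$-algebra and $\mathcal F\subseteq\mathcal A$ an algebra of finite type elements. For every projection $p\in\mathcal F$ there is an approximate unit $(p_\alpha)$ for $\mathcal F$ consisting of projections such that $p\le p_\alpha$ for all $\alpha$.
   Context: Let $\mathcal A$ be a unital $C^*$-algebra. A subalgebra $\mathcal F\subseteq\mathcal A$ is an algebra of finite type elements if: (i) $\mathcal F$ is a self-adjoint two-sided ideal of $\mathcal A$; (ii) $\mathcal F$ has an approximate unit consisting of projections, i.e. a net $(p_\alpha)$ of projections in $\mathcal F$ with $\|f-p_\alpha f\|\to0$ and $\|f-fp_\alpha\|\to0$ for every $f\in\mathcal F$; (iii) for any projections $p,q\in\mathcal F$ there is $v\in\mathcal A$ with $vv^*=q$ and $v^*vp=0$. *)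

From HB Require Import structures.
From mathcomp Require Import all_boot all_order all_algebra.
From mathcomp Require Import reals.
From mathcomp.real_closed Require Import complex.
Set Implicit Arguments. Unset Strict Implicit. Unset Printing Implicit Defensive.
Import Order.TTheory GRing.Theory Num.Theory.
Local Open Scope ring_scope.

HB.mixin Record isCStarAlgebra (R : realType) A of GRing.UnitAlgebra R[i] A := {
  cnorm : A -> R;
  cnorm_ge0 : forall a : A, 0 <= cnorm a;
  cnorm_eq0 : forall a : A, cnorm a = 0 -> a = 0;
  cnormD : forall a b : A, cnorm (a + b) <= cnorm a + cnorm b;
  cnormZ : forall (c : R[i]) (a : A), cnorm (c *: a) = ComplexField.Normc.normc c * cnorm a;
  cnorm_complete : forall u : nat -> A,
    (forall e : R, 0 < e -> exists N : nat, forall m n : nat,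
        (N <= m)%N -> (N <= n)%N -> cnorm (u m - u n) < e) ->
    exists l : A, forall e : R, 0 < e -> exists N : nat, forall n : nat,
        (N <= n)%N -> cnorm (u n - l) < e;
  cnormM : forall a b : A, cnorm (a * b) <= cnorm a * cnorm b;
  cnorm1 : cnorm (1 : A) = 1;
  cstar : A -> A;
  cstarK : involutive cstar;
  cstarD : forall a b : A, cstar (a + b) = cstar a + cstar b;
  cstarZ : forall (c : R[i]) (a : A), cstar (c *: a) = (Num.conj c) *: cstar a;
  cstarM : forall a b : A, cstar (a * b) = cstar b * cstar a;
  cstar_identity : forall a : A, cnorm (cstar a * a) = cnorm a ^+ 2
}.

#[short(type="cstarAlgType")]
HB.structure Definition CStarAlgebra (R : realType) :=
  {A of isCStarAlgebra R A & GRing.UnitAlgebra R[i] A}.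

Section CStarDefs.
Variables (R : realType) (A : cstarAlgType R).

Definition is_projection (p : A) : Prop := p * p = p /\ cstar p = p.

Definition self_adjoint (a : A) : Prop := cstar a = a.

Definition spectrum (a : A) : R[i] -> Prop :=
  fun z => ~ (a - z%:A \is a GRing.unit).

Definition positive (a : A) : Prop :=
  self_adjoint a /\ forall z : R[i], spectrum a z -> 0 <= z.

Definition cle (a b : A) : Prop :=
  self_adjoint a /\ self_adjoint b /\ positive (b - a).

Definition sa_ideal (F : A -> Prop) : Prop :=
  [/\ F 0,
      (forall f g, F f -> F g -> F (f + g)),
      (forall (c : R[i]) f, F f -> F (c *: f)),
      (forall a f, F f -> F (a * f) /\ F (f * a))
    & (forall f, F f -> F (cstar f))].

Definition directed (I : Type) (le : I -> I -> Prop) : Prop :=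
  [/\ inhabited I,
      (forall i, le i i),
      (forall i j k, le i j -> le j k -> le i k)
    & (forall i j, exists k, le i k /\ le j k)].

Definition net_to0 (I : Type) (le : I -> I -> Prop) (x : I -> A) : Prop :=
  forall e : R, 0 < e -> exists i0 : I, forall i, le i0 i -> cnorm (x i) < e.

Definition proj_approx_unit (F : A -> Prop)
    (I : Type) (le : I -> I -> Prop) (p : I -> A) : Prop :=
  [/\ directed le,
      (forall i, is_projection (p i) /\ F (p i))
    & (forall f, F f -> net_to0 le (fun i => f - p i * f)
                     /\ net_to0 le (fun i => f - f * p i))].

Definition finite_type_algebra (F : A -> Prop) : Prop :=
  [/\ sa_ideal F,
      (exists (I : Type) (le : I -> I -> Prop) (p : I -> A),
          proj_approx_unit F le p)
    & (forall p q, is_projection p -> F p -> is_projection q -> F q ->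
         exists v : A, v * cstar v = q /\ cstar v * v * p = 0)].

End CStarDefs.

From HB Require Import structures.
From mathcomp Require Import all_boot all_order all_algebra.
From mathcomp Require Import reals.
From mathcomp.real_closed Require Import complex.
From mathcomp Require Import lra.
Import Order.TTheory GRing.Theory Num.Theory.
Local Open Scope ring_scope.
Set Implicit Arguments. Unset Strict Implicit.

(* Start from any approximate unit (r_i) of projections of F.  When
   delta = ||p - r p|| is small, x = p r p + 1 - p is invertible and
   g = r + (1 - r) x^-1 p r is an idempotent of F with g p = p and
   ||g - r|| <= 2 delta.  Kaplansky's formula
   q = g g^* (1 + (g - g^* ) (g - g^* )^* )^-1 turns g into a projection of F
   with q g = g, so q p = p, i.e. p <= q, and ||r - q r|| <= 4 delta.  Since
   f - q f = (1 - q) (f - r f) + (r - q r) f, the projections q_i form an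
   approximate unit as soon as the r_i do. *)

Section CStarNorm.
Variables (R : realType) (A : cstarAlgType R).
Implicit Types a b : A.

Lemma cnorm0 : cnorm (0 : A) = 0.
Proof. by have := cnormZ 0 (0 : A); rewrite scale0r Normc.normc0 mul0r. Qed.

Lemma cnormN a : cnorm (- a) = cnorm a.
Proof. by rewrite -scaleN1r cnormZ normcN Normc.normc1 mul1r. Qed.

Lemma cnormB a b : cnorm (a - b) <= cnorm a + cnorm b.
Proof. by rewrite -(cnormN b) cnormD. Qed.

Lemma cnormX a n : cnorm (a ^+ n) <= cnorm a ^+ n.
Proof.
elim: n => [|n ih]; first by rewrite !expr0 cnorm1.
rewrite !exprS; apply: (le_trans (cnormM _ _)).
by rewrite ler_wpM2l ?cnorm_ge0.
Qed.

Lemma cnorm_small_eq0 a : (forall e : R, 0 < e -> cnorm a < e) -> a = 0.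
Proof.
move=> small; apply: cnorm_eq0; apply/eqP; rewrite eq_le cnorm_ge0 andbT.
by apply/ler_addgt0Pr => e e0; rewrite add0r ltW ?small.
Qed.

Lemma cstarN a : cstar (- a) = - cstar a.
Proof. by rewrite -scaleN1r cstarZ conjCN1 scaleN1r. Qed.

Lemma cstarB a b : cstar (a - b) = cstar a - cstar b.
Proof. by rewrite cstarD cstarN. Qed.

Lemma cstar1 : cstar (1 : A) = 1.
Proof. by rewrite -[cstar 1]mulr1 -{2}(cstarK 1) -cstarM mulr1 cstarK. Qed.

Lemma cstarV a : a \is a GRing.unit -> cstar a = a -> cstar a^-1 = a^-1.
Proof.
move=> ua sa; have aVa : cstar a^-1 * a = 1 by rewrite -{2}sa -cstarM mulrV ?cstar1.
by rewrite -[LHS]mulr1 -(mulrV ua) mulrA aVa mul1r.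
Qed.

Lemma cnorm_cstar a : cnorm (cstar a) = cnorm a.
Proof.
suff le_cstar b : cnorm b <= cnorm (cstar b).
  by apply/eqP; rewrite eq_le le_cstar -{2}(cstarK a) le_cstar.
have [->|nz] := eqVneq (cnorm b) 0; first exact: cnorm_ge0.
have := cnormM (cstar b) b; rewrite cstar_identity expr2.
by rewrite ler_pM2r // lt0r nz cnorm_ge0.
Qed.

Lemma cnorm_projection a : is_projection a -> cnorm a <= 1.
Proof.
case=> aa sa; have := cstar_identity a; rewrite sa aa expr2.
have [->|nz] := eqVneq (cnorm a) 0; first by rewrite ler01.
by rewrite -{1}[cnorm a]mulr1 => /(mulfI nz) <-.
Qed.

End CStarNorm.

Section NormConvergence.
Variables (R : realType) (A : cstarAlgType R).
Implicit Types (u v : nat -> A) (a l : A).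

Definition norm_cvg u l : Prop :=
  forall e : R, 0 < e -> exists N : nat, forall n, (N <= n)%N -> cnorm (u n - l) < e.

Lemma eq_norm_cvg u v l : (forall n, u n = v n) -> norm_cvg u l -> norm_cvg v l.
Proof.
by move=> uv ul e /ul[N hN]; exists N => n /hN; rewrite uv.
Qed.

Lemma norm_cvg_unique u l l' : norm_cvg u l -> norm_cvg u l' -> l = l'.
Proof.
move=> ul ul'; apply/eqP; rewrite -subr_eq0; apply/eqP.
apply: cnorm_small_eq0 => e e0; have e20 : 0 < e / 2 by rewrite divr_gt0.
have [N1 h1] := ul _ e20; have [N2 h2] := ul' _ e20.
have /h1 d1 := leq_maxl N1 N2; have /h2 d2 := leq_maxr N1 N2.
have -> : l - l' = (u (maxn N1 N2) - l') - (u (maxn N1 N2) - l).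
  by rewrite opprB [RHS]addrC addrA subrK.
by apply: (le_lt_trans (cnormB _ _)); lra.
Qed.

Lemma norm_cvg_lipschitz (phi : A -> A) (c : R) u l :
  (forall a b, cnorm (phi a - phi b) <= c * cnorm (a - b)) ->
  norm_cvg u l -> norm_cvg (fun n => phi (u n)) (phi l).
Proof.
move=> lip ul e e0; have c0 : 0 <= c.
  by have := lip 1 0; rewrite !subr0 cnorm1 mulr1; apply: le_trans; apply: cnorm_ge0.
have c1 : 0 < c + 1 by lra.
have [N hN] := ul _ (divr_gt0 e0 c1); exists N => n /hN.
rewrite ltr_pdivlMr // => small; apply: (le_lt_trans (lip _ _)).
have := cnorm_ge0 (u n - l); nra.
Qed.

Lemma norm_cvg_le u l (b : R) : norm_cvg u l -> (forall n, cnorm (u n) <= b) ->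
  cnorm l <= b.
Proof.
move=> ul ub; apply/ler_addgt0Pr => e /ul[N /(_ N (leqnn N)) small].
have -> : l = u N - (u N - l) by rewrite opprB addrC subrK.
by apply: (le_trans (cnormB _ _)); rewrite lerD ?ub ?ltW.
Qed.

End NormConvergence.

Section Neumann.
Variables (R : realType) (A : cstarAlgType R).

Lemma half_expr_small (e : R) : 0 < e ->
  exists N : nat, forall n, (N <= n)%N -> (2^-1)^+n < e.
Proof.
move=> e0; have ei : 0 <= e^-1 by rewrite invr_ge0 ltW.
exists (Num.Def.archi_bound e^-1) => n hn.
have : e^-1 < 2 ^+ n.
  apply: (lt_le_trans (archi_boundP ei)); rewrite -natrX ler_nat.
  exact: leq_trans hn (ltnW (ltn_expl _ _)).
by rewrite exprVn invf_plt ?posrE ?exprn_gt0.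
Qed.

Variable y : A.
Hypothesis y_small : cnorm y <= 2^-1.

Fixpoint geo_sum n : A := if n is m.+1 then 1 + y * geo_sum m else 0.

Lemma geo_sumD n k : geo_sum (n + k) = geo_sum n + y ^+ n * geo_sum k.
Proof.
elim: n => [|n ih]; first by rewrite add0n expr0 mul1r add0r.
by rewrite addSn /= ih mulrDr addrA exprS mulrA.
Qed.

Lemma mul_geo_sum n : (1 - y) * geo_sum n = 1 - y ^+ n.
Proof.
elim: n => [|n ih] /=; first by rewrite mulr0 expr0 subrr.
have yC : (1 - y) * y = y * (1 - y) by rewrite mulrBl mulrBr mul1r mulr1.
by rewrite mulrDr mulr1 mulrA yC -mulrA ih mulrBr mulr1 -exprS addrA subrK.
Qed.

Lemma geo_sum_mul n : geo_sum n * (1 - y) = 1 - y ^+ n.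
Proof.
elim: n => [|n ih] /=; first by rewrite mul0r expr0 subrr.
by rewrite mulrDl mul1r -mulrA ih mulrBr mulr1 -exprS addrA subrK.
Qed.

Lemma cnorm_expr_half n : cnorm (y ^+ n) <= (2^-1)^+n.
Proof.
apply: (le_trans (cnormX _ _)).
by rewrite lerXn2r ?nnegrE ?cnorm_ge0 ?invr_ge0 ?ler0n.
Qed.

Lemma cnorm_geo_sum n : cnorm (geo_sum n) <= 2.
Proof.
elim: n => [|n ih] /=; first by rewrite cnorm0 ler0n.
apply: (le_trans (cnormD _ _)); rewrite cnorm1.
have : cnorm y * cnorm (geo_sum n) <= 2^-1 * 2 by rewrite ler_pM ?cnorm_ge0.
by rewrite mulVf ?pnatr_eq0 // => /(le_trans (cnormM _ _)); lra.
Qed.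

Lemma cnorm_geo_sum_sub N m : (N <= m)%N ->
  cnorm (geo_sum m - geo_sum N) <= 2 * (2^-1)^+N.
Proof.
move/subnKC <-; rewrite geo_sumD addrC addKr.
apply: (le_trans (cnormM _ _)); rewrite mulrC.
by rewrite ler_pM ?cnorm_ge0 ?cnorm_expr_half ?cnorm_geo_sum.
Qed.

Lemma geo_sum_cvg : exists l, norm_cvg geo_sum l.
Proof.
apply: cnorm_complete => e e0.
have [N hN] := half_expr_small (divr_gt0 e0 (ltr0n _ 4)).
exists N => m n hm hn; have /hN small := leqnn N.
have -> : geo_sum m - geo_sum n = (geo_sum m - geo_sum N) - (geo_sum n - geo_sum N).
  by rewrite opprB addrA subrK.
apply: (le_lt_trans (cnormB _ _)).
have := cnorm_geo_sum_sub hm; have := cnorm_geo_sum_sub hn; lra.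
Qed.

Lemma norm_cvg_1_expr : norm_cvg (fun n => 1 - y ^+ n) 1.
Proof.
move=> e /half_expr_small[N hN]; exists N => n /hN small.
by rewrite addrAC subrr add0r cnormN (le_lt_trans (cnorm_expr_half n)).
Qed.

Lemma neumann_inverse : exists l : A,
  [/\ l * (1 - y) = 1, (1 - y) * l = 1 & cnorm l <= 2].
Proof.
have [l Sl] := geo_sum_cvg; exists l; split.
- apply: (norm_cvg_unique _ norm_cvg_1_expr); apply: (eq_norm_cvg geo_sum_mul).
  apply: (norm_cvg_lipschitz (phi := fun a => a * (1 - y)) (c := cnorm (1 - y))) Sl.
  by move=> a b; rewrite -mulrBl mulrC cnormM.
- apply: (norm_cvg_unique _ norm_cvg_1_expr); apply: (eq_norm_cvg mul_geo_sum).
  apply: (norm_cvg_lipschitz (phi := fun a => (1 - y) * a) (c := cnorm (1 - y))) Sl.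
  by move=> a b; rewrite -mulrBr cnormM.
- exact: norm_cvg_le Sl cnorm_geo_sum.
Qed.

End Neumann.

Lemma unit_near1 (R : realType) (A : cstarAlgType R) (x : A) :
  cnorm (1 - x) <= 2^-1 -> x \is a GRing.unit /\ cnorm x^-1 <= 2.
Proof.
case/neumann_inverse=> l []; rewrite opprB addrC subrK => lx xl l2.
have ux : x \is a GRing.unit by apply/GRing.unitrP; exists l.
by rewrite -[x^-1]mul1r -lx -mulrA mulrV ?mulr1.
Qed.

Section ProjectionOrder.
Variables (R : realType) (A : cstarAlgType R).

Lemma idempotent_scale_mul (e : A) (a b c d : R[i]) : e * e = e ->
  (a *: e + b *: (1 - e)) * (c *: e + d *: (1 - e))
  = (a * c) *: e + (b * d) *: (1 - e).
Proof.
move=> ee; have e1 : e * (1 - e) = 0 by rewrite mulrBr mulr1 ee subrr.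
have e2 : (1 - e) * e = 0 by rewrite mulrBl mul1r ee subrr.
have e3 : (1 - e) * (1 - e) = 1 - e by rewrite mulrBl mul1r e1 subr0.
rewrite mulrDl !mulrDr -!scalerAl -!scalerAr !scalerA ee e1 e2 e3.
by rewrite !scaler0 addr0 add0r.
Qed.

(* For [z] other than 0 and 1, [(1 - z)^-1 e - z^-1 (1 - e)] inverts [e - z]. *)
Lemma projection_positive (e : A) : is_projection e -> positive e.
Proof.
case=> ee se; split=> // z ez.
have [->|z0] := eqVneq z 0; first exact: lexx.
have [->|z1] := eqVneq z 1; first exact: ler01.
exfalso; apply: ez; apply/GRing.unitrP.
have -> : e - z%:A = (1 - z) *: e + (- z) *: (1 - e).
  by rewrite scalerBl scale1r scaleNr scalerBr opprB addrA subrK.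
have z1' : 1 - z != 0 by rewrite subr_eq0 eq_sym.
exists ((1 - z)^-1 *: e + (- z)^-1 *: (1 - e)); rewrite !idempotent_scale_mul //.
by rewrite mulVf // mulVf ?oppr_eq0 // mulfV // mulfV ?oppr_eq0 // !scale1r addrC subrK.
Qed.

Lemma projection_le (p q : A) :
  is_projection p -> is_projection q -> q * p = p -> cle p q.
Proof.
move=> [pp sp] [qq sq] qp.
have pq : p * q = p by rewrite -{1}sp -{1}sq -cstarM qp sp.
do 2!split=> //; apply: projection_positive; split.
  by rewrite mulrBl !mulrBr qq qp pq pp subrr subr0.
by rewrite cstarB sp sq.
Qed.

End ProjectionOrder.

Section KaplanskyProjection.
Variables (R : realType) (A : cstarAlgType R).

Lemma unit_commute (z a : A) : z \is a GRing.unit -> z * a = a * z -> z^-1 * a = a * z^-1.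
Proof.
move=> uz za.
by rewrite -[LHS]mulr1 -(mulrV uz) mulrA -[z^-1 * a * z]mulrA -za mulrA mulVr ?mul1r.
Qed.

Definition kaplansky_defect (g : A) : A := 1 + (g - cstar g) * cstar (g - cstar g).

(* Kaplansky's formula for the range projection of an idempotent [g]. *)
Definition kaplansky_proj (g : A) : A := g * cstar g * (kaplansky_defect g)^-1.

Lemma kaplansky_defect_mul (g h : A) : g * g = g -> h * h = h ->
  (1 + (g - h) * (h - g)) * g = g * h * g.
Proof.
move=> gg hh; rewrite mulrDl mul1r -mulrA (mulrBl g h g) gg.
rewrite (mulrBl (h * g - g) g h) (mulrBr h) mulrA hh subrr subr0.
by rewrite mulrBr gg mulrA addrC subrK.
Qed.

Lemma kaplansky_projP (g : A) : g * g = g ->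
  kaplansky_defect g \is a GRing.unit ->
  is_projection (kaplansky_proj g) /\ kaplansky_proj g * g = g.
Proof.
rewrite /kaplansky_proj /kaplansky_defect cstarB cstarK.
set h := cstar g; set z := 1 + _ => gg uz.
have hh : h * h = h by rewrite /h -cstarM gg.
have zg : z * g = g * h * g by rewrite kaplansky_defect_mul.
have zh : z * h = h * g * h.
  have -> : z = 1 + (h - g) * (g - h) by rewrite /z -[(g - h) * _]mulrNN !opprB.
  exact: kaplansky_defect_mul.
have sz : cstar z = z by rewrite /z cstarD cstar1 cstarM !cstarB cstarK.
have gz : g * z = g * h * g.
  by have := congr1 cstar zh; rewrite !cstarM sz cstarK mulrA.
have hz : h * z = h * g * h.
  by have := congr1 cstar zg; rewrite !cstarM sz cstarK mulrA.
have zgh : z * (g * h) = g * h * z.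
  by rewrite mulrA zg -(mulrA g h g) -mulrA -hz mulrA.
have zVgh := unit_commute uz zgh.
have zVg : z^-1 * g = g * z^-1 by apply: unit_commute; rewrite // zg gz.
have qg : g * h * z^-1 * g = g by rewrite -mulrA zVg mulrA -gz -mulrA mulrV ?mulr1.
do ![split].
- by rewrite !mulrA qg.
- by rewrite !cstarM cstarV // cstarK zVgh.
- exact: qg.
Qed.

End KaplanskyProjection.

Section DominatingProjection.
Variables (R : realType) (A : cstarAlgType R).

Lemma cnorm_sub_projM (q r f : A) : cnorm q <= 1 ->
  cnorm (f - q * f) <= 2 * cnorm (f - r * f) + cnorm (r - q * r) * cnorm f.
Proof.
move=> q1.
have -> : f - q * f = (f - r * f) - q * (f - r * f) + (r - q * r) * f.
  by rewrite mulrBr mulrBl mulrA opprB addrACA subrK addrAC subrr add0r.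
apply: (le_trans (cnormD _ _)); rewrite lerD ?cnormM //.
apply: (le_trans (cnormB _ _)); apply: (le_trans (lerD (lexx _) (cnormM _ _))).
have := cnorm_ge0 (f - r * f); nra.
Qed.

Definition compression (p r : A) : A := p * r * p + (1 - p).

Definition dominating_defect (p r : A) : A := (1 - r) * (compression p r)^-1 * p * r.

Definition dominating_idem (p r : A) : A := r + dominating_defect p r.

Definition dominating_proj (p r : A) : A :=
  if 8 * cnorm (p - r * p) < 1 then kaplansky_proj (dominating_idem p r) else p.

Lemma dominating_proj_in (F : A -> Prop) (p r : A) :
  sa_ideal F -> F p -> F r -> F (dominating_proj p r).
Proof.
case=> _ FD _ FM _ Fp Fr; rewrite /dominating_proj; case: ifP => // _.
rewrite /kaplansky_proj -mulrA; apply: (FM _ _ _).2; apply: FD => //.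
exact: (FM _ _ Fr).1.
Qed.

Variables (p r : A).
Hypotheses (hp : is_projection p) (hr : is_projection r).
(* [lra] and [nra] ignore section hypotheses, hence the [move: close] before them. *)
Hypothesis close : 8 * cnorm (p - r * p) < 1.

Local Notation x := (compression p r).
Local Notation d := (dominating_defect p r).
Local Notation g := (dominating_idem p r).
Local Notation delta := (cnorm (p - r * p)).

Lemma compression_unit : x \is a GRing.unit /\ cnorm x^-1 <= 2.
Proof.
have [pp _] := hp; apply: unit_near1.
have -> : 1 - x = p * (p - r * p).
  by rewrite mulrBr pp mulrA /compression opprD opprB addrA addrC addrA subrK.
apply: (le_trans (cnormM _ _)).
have : cnorm p * delta <= delta by rewrite ler_piMl ?cnorm_ge0 ?cnorm_projection.
move: close; lra.
Qed.

Lemma compression_invP : x^-1 * p = p * x^-1 /\ x^-1 * (p * r * p) = p.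
Proof.
have [pp _] := hp; have [ux _] := compression_unit.
have xp : x * p = p * r * p.
  by rewrite /compression mulrDl mulrBl mul1r pp subrr addr0 -mulrA pp.
have px : p * x = p * r * p.
  by rewrite /compression mulrDr mulrBr mulr1 pp subrr addr0 !mulrA pp.
split; first by apply: unit_commute; rewrite // xp px.
by rewrite -xp mulrA mulVr ?mul1r.
Qed.

Lemma cnorm_dominating_defect : cnorm d <= 2 * delta.
Proof.
have [_ xV2] := compression_unit; have [xVp _] := compression_invP.
have -> : d = (p - r * p) * x^-1 * r.
  by rewrite /dominating_defect -(mulrA _ x^-1) xVp mulrA mulrBl mul1r.
have := cnormM ((p - r * p) * x^-1) r; have := cnormM (p - r * p) x^-1.
have := cnorm_projection hr; have := cnorm_ge0 ((p - r * p) * x^-1).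
have := cnorm_ge0 (p - r * p); nra.
Qed.

Lemma dominating_idemP : g * g = g /\ g * p = p.
Proof.
have [rr _] := hr; have [_ xVprp] := compression_invP.
have gE : g = r + d by [].
have rd : r * d = 0 by rewrite /dominating_defect !mulrA mulrBr mulr1 rr subrr !mul0r.
have dr : d * r = d by rewrite /dominating_defect -[LHS]mulrA rr.
have dp : d * p = (1 - r) * p by rewrite /dominating_defect -!mulrA (mulrA p r p) xVprp.
have dd : d * d = 0 by rewrite -{1}dr -mulrA rd mulr0.
split; rewrite gE mulrDl.
- by rewrite !mulrDr dr dd rd rr !addr0.
- by rewrite dp mulrBl mul1r addrC subrK.
Qed.

Lemma cnorm_dominating_idem_adjoint : cnorm (g - cstar g) <= 4 * delta.
Proof.
have [_ sr] := hr; have gE : g = r + d by [].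
rewrite gE cstarD sr opprD addrACA subrr add0r.
apply: (le_trans (cnormB _ _)); rewrite cnorm_cstar.
have := cnorm_dominating_defect; lra.
Qed.

Lemma kaplansky_defect_unit : kaplansky_defect g \is a GRing.unit.
Proof.
apply: (proj1 (unit_near1 _)).
rewrite /kaplansky_defect opprD addrA subrr add0r cnormN.
apply: (le_trans (cnormM _ _)); rewrite cnorm_cstar.
have := cnorm_dominating_idem_adjoint; have := cnorm_ge0 (g - cstar g).
have := cnorm_ge0 (p - r * p); move: close; nra.
Qed.

Lemma dominating_proj_close : cnorm (r - dominating_proj p r * r) <= 4 * delta.
Proof.
have [gg _] := dominating_idemP.
have [hq qg] := kaplansky_projP gg kaplansky_defect_unit.
rewrite /dominating_proj close; set q := kaplansky_proj g.
have -> : r - q * r = q * d - d.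
  have dE : d = g - r by rewrite /dominating_idem addrC addKr.
  by rewrite dE mulrBr qg opprB [RHS]addrC addrA subrK.
apply: (le_trans (cnormB _ _)); apply: (le_trans (lerD (cnormM _ _) (lexx _))).
have := cnorm_projection hq; have := cnorm_ge0 q; have := cnorm_ge0 d.
have := cnorm_dominating_defect; nra.
Qed.

End DominatingProjection.

Section DominatingApproximateUnit.
Variables (R : realType) (A : cstarAlgType R).

Lemma dominating_projP (p r : A) : is_projection p -> is_projection r ->
  is_projection (dominating_proj p r) /\ dominating_proj p r * p = p.
Proof.
move=> hp hr; rewrite /dominating_proj; case: ifP => [close|_]; last first.
  by split=> //; case: hp.
have [gg gp] := dominating_idemP hp hr close.
have [hq qg] := kaplansky_projP gg (kaplansky_defect_unit hp hr close).
by split=> //; rewrite -{2}gp mulrA qg.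
Qed.

Lemma dominating_proj_approx (p r f : A) :
  is_projection p -> is_projection r -> 8 * cnorm (p - r * p) < 1 ->
  cnorm (f - dominating_proj p r * f)
  <= (2 + 4 * cnorm f) * (cnorm (f - r * f) + cnorm (p - r * p)).
Proof.
move=> hp hr close; have [hq _] := dominating_projP hp hr.
apply: (le_trans (cnorm_sub_projM r f (cnorm_projection hq))).
have := dominating_proj_close hp hr close; have := cnorm_ge0 f.
have := cnorm_ge0 (f - r * f); have := cnorm_ge0 (p - r * p); nra.
Qed.

Lemma net_to0_dominated (I : Type) (le : I -> I -> Prop) (u v w : I -> A) (M c : R) :
  directed le -> 0 < c -> 0 <= M -> net_to0 le u -> net_to0 le v ->
  (forall i, cnorm (v i) < c -> cnorm (w i) <= M * (cnorm (u i) + cnorm (v i))) ->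
  net_to0 le w.
Proof.
move=> [_ _ transI ubI] c0 M0 u0 v0 uvw e e0.
have M1 : 0 < 2 * (M + 1) by lra.
have t0 : 0 < Num.min c (e / (2 * (M + 1))) by rewrite lt_min c0 divr_gt0.
have [i1 hu] := u0 _ t0; have [i2 hv] := v0 _ t0; have [k [k1 k2]] := ubI i1 i2.
exists k => i ki; have /hu := transI _ _ _ k1 ki; have /hv := transI _ _ _ k2 ki.
rewrite !lt_min => /andP[vc vt] /andP[_ ut].
apply: (le_lt_trans (uvw i vc)).
have := cnorm_ge0 (u i); have := cnorm_ge0 (v i).
move: vt ut; rewrite !ltr_pdivlMr //; nra.
Qed.

End DominatingApproximateUnit.

Theorem mainTheorem12 (R : realType) (A : cstarAlgType R) (F : A -> Prop) :
  finite_type_algebra F ->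
  forall p : A, is_projection p -> F p ->
  exists (I : Type) (le : I -> I -> Prop) (q : I -> A),
    proj_approx_unit F le q /\ (forall i : I, cle p (q i)).
Proof.
move=> [idF [I [le [r [dir projr unitr]]]] _] p hp Fp.
pose q i := dominating_proj p (r i).
have qP i : is_projection (q i) /\ q i * p = p := dominating_projP hp (projr i).1.
have q_left f : F f -> net_to0 le (fun i => f - q i * f).
  move=> Ff; apply: (net_to0_dominated (c := 8^-1) (M := 2 + 4 * cnorm f) dir).
  - by rewrite invr_gt0 ltr0n.
  - by have := cnorm_ge0 f; lra.
  - exact: (unitr f Ff).1.
  - exact: (unitr p Fp).1.
  move=> i close; apply: dominating_proj_approx hp (projr i).1 _.
  by rewrite -ltr_pdivlMl ?mulr1.
exists I, le, q; split; last by move=> i; apply: projection_le hp (qP i).1 (qP i).2.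
split=> [//|i|f Ff].
  by split; [exact: (qP i).1 | exact: dominating_proj_in idF Fp (projr i).2].
split; first exact: q_left.
have [_ _ _ _ Fstar] := idF.
move=> e /(q_left _ (Fstar f Ff))[k hk]; exists k => i /hk.
by rewrite -cnorm_cstar cstarB cstarM cstarK (proj2 (qP i).1).
Qed.
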